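(* Fix $\epsilon>0$, a unitary $2\times2$ operator $R$ with $\det R=1$, and a Clifford+$T$ operator $U$. The following are equivalent: (1) there exists a unit scalar $\lambda$ such that $\|R-\lambda U\|\le\epsilon$; (2) there exists $n\in\mathbb Z$ such that $\|R-e^{in\pi/8}U\|\le\epsilon$.
   Context: Let $\omega=e^{i\pi/4}$, $H=\frac{1}{\sqrt2}\begin{bmatrix}1&1\\1&-1\end{bmatrix}$, $S=\begin{bmatrix}1&0\\0&i\end{bmatrix}$, $T=\begin{bmatrix}1&0\\0&\omega\end{bmatrix}$. A Clifford+$T$ operator is an element of the group generated by $\omega I$, $H$, $S$, $T$. $\|\cdot\|$ denotes the operator norm on $2\times2$ complex matrices. *)

From HB Require Import structures.
From mathcomp Require Import all_boot all_order all_algebra.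
From mathcomp Require Import complex.
From mathcomp Require Import classical_sets reals trigo.
Set Implicit Arguments. Unset Strict Implicit. Unset Printing Implicit Defensive.
Import Order.TTheory GRing.Theory Num.Theory.
Local Open Scope ring_scope.
Local Open Scope classical_set_scope.

Section Defs.
Variable R : realType.

Definition expi (x : R) : R[i] := (cos x +i* sin x)%C.

Definition vnorm (v : 'cV[R[i]]_2) : R :=
  Num.sqrt (\sum_(k < 2) Normc.normc (v k 0) ^+ 2).

Definition opnorm (A : 'M[R[i]]_2) : R :=
  sup [set vnorm (A *m v) | v in [set v | vnorm v = 1]].

Definition adjoint (A : 'M[R[i]]_2) : 'M[R[i]]_2 := (map_mx conjc A)^T.
Definition unitary (A : 'M[R[i]]_2) : Prop := A *m adjoint A = 1%:M.

Definition omega : R[i] := expi (pi / 4).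

Definition Hgate : 'M[R[i]]_2 :=
  ((Num.sqrt 2)^-1)%:C%C *:
    \matrix_(i < 2, j < 2) (if (i == 1 :> nat) && (j == 1 :> nat) then -1 else 1).

Definition Sgate : 'M[R[i]]_2 :=
  \matrix_(i < 2, j < 2)
    (if i == j then (if i == 0 :> nat then 1 else 'i%C) else 0).

Definition Tgate : 'M[R[i]]_2 :=
  \matrix_(i < 2, j < 2)
    (if i == j then (if i == 0 :> nat then 1 else omega) else 0).

Inductive clifford_T : 'M[R[i]]_2 -> Prop :=
  | cT_omega : clifford_T (omega%:M)
  | cT_H : clifford_T Hgate
  | cT_S : clifford_T Sgate
  | cT_T : clifford_T Tgate
  | cT_one : clifford_T 1%:M
  | cT_mul A B : clifford_T A -> clifford_T B -> clifford_T (A *m B)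
  | cT_inv A : clifford_T A -> clifford_T (invmx A).

End Defs.

(* Every Clifford+T operator U is unitary with det U = e^(i k pi/4), so with
   mu0 = e^(-i k pi/8) both mu0 U and -mu0 U have determinant 1.  If R and V
   lie in SU(2), then R - V has the shape [[x, -y^*], [y, x^*]], a multiple
   of a unitary, so its operator norm is the norm of its first column.  For an
   arbitrary unit scalar lam, the squared norms of the two columns of
   R - lam U average to at least the squared first-column norm of R - mu U for
   one of mu = mu0, -mu0; hence ||R - mu U|| <= ||R - lam U||, and
   mu = e^(i n pi/8) with n = -k or n = 8 - k. *)

From HB Require Import structures.
From mathcomp Require Import all_boot all_order all_algebra.
From mathcomp Require Import complex.
From mathcomp Require Import classical_sets reals trigo.
From mathcomp Require Import ring lra.
Set Implicit Arguments.
Unset Strict Implicit.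
Unset Printing Implicit Defensive.

Import Order.TTheory GRing.Theory Num.Theory.
Local Open Scope ring_scope.

Section CliffordT.
Variable R : realType.
Local Notation C := R[i].

Definition sqnormc (z : C) : R := complex.Re z ^+ 2 + complex.Im z ^+ 2.

Lemma conjCD (x y : C) : (x + y)^* = x^* + y^*. Proof. exact: rmorphD. Qed.
Lemma conjCB (x y : C) : (x - y)^* = x^* - y^*. Proof. exact: rmorphB. Qed.
Lemma conjCN (x : C) : (- x)^* = - x^*. Proof. exact: rmorphN. Qed.
Lemma conjCM (x y : C) : (x * y)^* = x^* * y^*. Proof. exact: rmorphM. Qed.

Lemma sqnormc_ge0 (z : C) : 0 <= sqnormc z.
Proof. by rewrite addr_ge0 ?sqr_ge0. Qed.

Lemma sqnormcE (z : C) : (sqnormc z)%:C%C = z^* * z.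
Proof. by case: z => a b; simpc; congr (_ +i* _)%C; ring. Qed.

Lemma sqnormcM (x y : C) : sqnormc (x * y) = sqnormc x * sqnormc y.
Proof. by case: x => a b; case: y => c d; rewrite /sqnormc /=; ring. Qed.

Lemma sqnormcJ (x : C) : sqnormc x^* = sqnormc x.
Proof. by case: x => a b; rewrite /sqnormc /=; ring. Qed.

Lemma sqnormcN (x : C) : sqnormc (- x) = sqnormc x.
Proof. by case: x => a b; rewrite /sqnormc /=; ring. Qed.

Lemma sqnormcB (x y : C) :
  sqnormc (x - y) = sqnormc x + sqnormc y - 2 * complex.Re (x^* * y).
Proof. by case: x => a b; case: y => c d; rewrite /sqnormc /=; ring. Qed.

Lemma sqnormc_normc (z : C) : Normc.normc z ^+ 2 = sqnormc z.
Proof. by case: z => a b; rewrite /= sqr_sqrtr ?addr_ge0 ?sqr_ge0. Qed.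

Lemma sqnormc_eq1 (z : C) : `|z| = 1 -> sqnormc z = 1.
Proof.
by rewrite normc_def => -[h]; rewrite -(sqr_sqrtr (sqnormc_ge0 z)) /sqnormc h expr1n.
Qed.

Lemma mulJ_sqnormc1 (z : C) : sqnormc z = 1 -> z^* * z = 1.
Proof. by move=> h; rewrite -sqnormcE h. Qed.

Lemma Re_sqr_le_sqnormc (z : C) : complex.Re z ^+ 2 <= sqnormc z.
Proof. by rewrite lerDl sqr_ge0. Qed.

Lemma ReM_add_ReMJ (z w : C) :
  complex.Re (z * w) + complex.Re (z * w^*) = 2 * complex.Re z * complex.Re w.
Proof. by case: z => a b; case: w => c d; rewrite /=; ring. Qed.

Lemma expiD (x y : R) : expi x * expi y = expi (x + y).
Proof. by rewrite /expi cosD sinD /=; congr (_ +i* _)%C; ring. Qed.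

Lemma expi0 : expi 0 = 1 :> C.
Proof. by rewrite /expi cos0 sin0. Qed.

Lemma expi_pi : expi pi = -1 :> C.
Proof. by rewrite /expi cospi sinpi; apply/eqP; rewrite eq_complex /= oppr0 !eqxx. Qed.

Lemma sqnorm_expi (x : R) : sqnormc (expi x) = 1.
Proof. exact: cos2Dsin2. Qed.

Lemma norm_expi (x : R) : `|expi x| = 1.
Proof. by rewrite normc_def -/(sqnormc _) sqnorm_expi sqrtr1. Qed.

Lemma expiN (x : R) : expi (- x) = (expi x)^-1.
Proof.
have ex_neq0 : expi x != 0.
  apply/eqP => ex0; move: (sqnorm_expi x).
  by rewrite ex0 /sqnormc /= expr0n addr0 => /eqP; rewrite eq_sym oner_eq0.
by apply: (mulIf ex_neq0); rewrite expiD addNr expi0 mulVf.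
Qed.

Lemma ord2_cases (i : 'I_2) : i = 0 \/ i = 1.
Proof. by case: i => [[|[|//]] ?]; [left | right]; apply/val_inj. Qed.

Lemma mulmx2E n (A : 'M[C]_2) (B : 'M[C]_(2, n)) i j :
  (A *m B) i j = A i 0 * B 0 j + A i 1 * B 1 j.
Proof.
rewrite mxE !big_ord_recl big_ord0 addr0.
by have -> : lift ord0 ord0 = 1 :> 'I_2 by apply/val_inj.
Qed.

Lemma det2E (A : 'M[C]_2) : \det A = A 0 0 * A 1 1 - A 0 1 * A 1 0.
Proof.
rewrite (expand_det_row _ 0) !big_ord_recl big_ord0 /cofactor !det_mx11 !mxE /=.
have -> : lift 0 0 = 1 :> 'I_2 by apply/val_inj.
have -> : lift 1 0 = 0 :> 'I_2 by apply/val_inj.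
by rewrite /bump /= expr0 expr1; ring.
Qed.

Lemma adjointE (A : 'M[C]_2) i j : adjoint A i j = (A j i)^*.
Proof. by rewrite !mxE. Qed.

Lemma adjoint_mulmx (A B : 'M[C]_2) : adjoint (A *m B) = adjoint B *m adjoint A.
Proof. by rewrite /adjoint map_mxM trmx_mul. Qed.

Lemma adjointK (A : 'M[C]_2) : adjoint (adjoint A) = A.
Proof. by apply/matrixP => i j; rewrite !adjointE conjCK. Qed.

Lemma unitaryE (A : 'M[C]_2) : unitary A <->
  [/\ A 0 0 * (A 0 0)^* + A 0 1 * (A 0 1)^* = 1,
      A 0 0 * (A 1 0)^* + A 0 1 * (A 1 1)^* = 0,
      A 1 0 * (A 0 0)^* + A 1 1 * (A 0 1)^* = 0 &
      A 1 0 * (A 1 0)^* + A 1 1 * (A 1 1)^* = 1].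
Proof.
split=> [/matrixP uA | [u00 u01 u10 u11]].
  by move: (uA 0 0) (uA 0 1) (uA 1 0) (uA 1 1); rewrite !mulmx2E !adjointE !mxE.
apply/matrixP => i j; rewrite mulmx2E !adjointE !mxE.
by case: (ord2_cases i) => ->; case: (ord2_cases j) => ->.
Qed.

Lemma unitary_mulmx (A B : 'M[C]_2) : unitary A -> unitary B -> unitary (A *m B).
Proof.
by rewrite /unitary adjoint_mulmx => uA uB; rewrite mulmxA -(mulmxA A) uB mulmx1 uA.
Qed.

Lemma unitary_invmx (A : 'M[C]_2) : unitary A -> unitary (invmx A).
Proof.
move=> uA; have [Aunit _] := mulmx1_unit uA.
have -> : invmx A = adjoint A by rewrite -[invmx A]mulmx1 -uA mulmxA mulVmx ?mul1mx.
by rewrite /unitary adjointK; apply: mulmx1C.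
Qed.

Lemma unitary_scalar_mx (a : C) : a * a^* = 1 -> unitary a%:M.
Proof.
move=> aaJ; apply/unitaryE.
by rewrite !mxE /= mulr1n mulr0n rmorph0 !mul0r !mulr0 !addr0 !add0r; split.
Qed.

Definition phase_gate (u : C) : 'M[C]_2 :=
  \matrix_(i < 2, j < 2) (if i == j then (if i == 0 :> nat then 1 else u) else 0).

Lemma unitary_phase_gate (u : C) : u * u^* = 1 -> unitary (phase_gate u).
Proof.
move=> uuJ; apply/unitaryE.
by rewrite !mxE /= rmorph0 rmorph1 !mul0r !mulr0 mulr1 !addr0 !add0r; split.
Qed.

Lemma det_phase_gate (u : C) : \det (phase_gate u) = u.
Proof. by rewrite det2E !mxE /= mul1r mul0r subr0. Qed.

Lemma inv_sqrt2_sqrD :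
  let s := ((Num.sqrt 2)^-1)%:C%C in s * s + s * s = 1 :> C.
Proof.
have t2 : (Num.sqrt 2)^-1 ^+ 2 = 2^-1 :> R by rewrite exprVn sqr_sqrtr ?ler0n.
have halves : 2^-1 + 2^-1 = 1 :> R by rewrite [RHS]splitr mul1r.
by rewrite /= -rmorphM -rmorphD -expr2 t2 halves.
Qed.

Lemma unitary_Hgate : unitary (Hgate R).
Proof.
apply/unitaryE; rewrite !mxE /= !mulr1 !mulrN1.
have := inv_sqrt2_sqrD; set s := real_complex_def _ _ => /= ssD.
have sJ : s^* = s :> C by rewrite /s; simpc.
have sNJ : (- s)^* = - s :> C by rewrite /s; simpc.
by rewrite sJ sNJ !mulrN !mulNr !opprK ssD subrr.
Qed.

Lemma det_Hgate : \det (Hgate R) = -1.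
Proof. by rewrite det2E !mxE /= !mulr1 mulrN1 mulrN -opprD inv_sqrt2_sqrD. Qed.

Lemma expi_mulJ (x : R) : expi x * (expi x)^* = 1.
Proof. by rewrite mulrC -sqnormcE sqnorm_expi. Qed.

Lemma expi_pihalf : expi (pi / 2) = 'i%C :> C.
Proof. by rewrite /expi cos_pihalf sin_pihalf. Qed.

Lemma Sgate_phase : Sgate R = phase_gate 'i%C.
Proof. by []. Qed.

Lemma Tgate_phase : Tgate R = phase_gate (omega R).
Proof. by []. Qed.

Lemma clifford_T_unitary (U : 'M[C]_2) : clifford_T U -> unitary U.
Proof.
elim=> [|||||A B _ uA _ uB|A _ uA].
- exact/unitary_scalar_mx/expi_mulJ.
- exact: unitary_Hgate.
- by rewrite Sgate_phase -expi_pihalf; apply/unitary_phase_gate/expi_mulJ.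
- by rewrite Tgate_phase; apply/unitary_phase_gate/expi_mulJ.
- by apply: unitary_scalar_mx; rewrite rmorph1 mulr1.
- exact: unitary_mulmx.
- exact: unitary_invmx.
Qed.

Lemma clifford_T_det (U : 'M[C]_2) :
  clifford_T U -> exists k : int, \det U = expi (k%:~R * pi / 4).
Proof.
elim=> [|||||A B _ [k detA] _ [l detB]|A _ [k detA]].
- exists 2; rewrite det_scalar expr2 expiD; congr expi.
  by rewrite -[2%:~R]/(2%:R : R); field.
- exists 4; rewrite det_Hgate -expi_pi; congr expi.
  by rewrite -[4%:~R]/(4%:R : R); field.
- exists 2; rewrite Sgate_phase det_phase_gate -expi_pihalf; congr expi.
  by rewrite -[2%:~R]/(2%:R : R); field.
- by exists 1; rewrite Tgate_phase det_phase_gate mul1r.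
- by exists 0; rewrite det1 !mul0r expi0.
- by exists (k + l); rewrite det_mulmx detA detB expiD intrD mulrDl mulrDl.
- by exists (- k); rewrite det_inv detA -expiN intrN !mulNr.
Qed.

Definition colnorm2 n (A : 'M[C]_(2, n)) (j : 'I_n) : R :=
  sqnormc (A 0 j) + sqnormc (A 1 j).

Lemma colnorm2_ge0 n (A : 'M[C]_(2, n)) j : 0 <= colnorm2 A j.
Proof. by rewrite addr_ge0 ?sqnormc_ge0. Qed.

Lemma vnormE (v : 'cV[C]_2) : vnorm v = Num.sqrt (colnorm2 v 0).
Proof.
rewrite /vnorm !big_ord_recl big_ord0 addr0 !sqnormc_normc.
by have -> : lift ord0 ord0 = 1 :> 'I_2 by apply/val_inj.
Qed.

Lemma vnorm_eq1 (v : 'cV[C]_2) : vnorm v = 1 -> colnorm2 v 0 = 1.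
Proof. by rewrite vnormE => v1; rewrite -(sqr_sqrtr (colnorm2_ge0 v 0)) v1 expr1n. Qed.

Lemma vnorm_delta (j : 'I_2) : vnorm (delta_mx j 0 : 'cV[C]_2) = 1.
Proof.
rewrite vnormE /colnorm2 !mxE /sqnormc /=.
by case: (ord2_cases j) => ->; rewrite /= expr1n expr0n /= ?addr0 ?add0r sqrtr1.
Qed.

Lemma sqnormc_dot_le (a b x y : C) :
  sqnormc (a * x + b * y) <= (sqnormc a + sqnormc b) * (sqnormc x + sqnormc y).
Proof.
rewrite -subr_ge0.
have -> : (sqnormc a + sqnormc b) * (sqnormc x + sqnormc y) - sqnormc (a * x + b * y)
    = sqnormc (a * y^* - b * x^*).
  case: a => a1 a2; case: b => b1 b2; case: x => x1 x2; case: y => y1 y2.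
  by rewrite /sqnormc /=; ring.
exact: sqnormc_ge0.
Qed.

Lemma colnorm2_mulmx_le (A : 'M[C]_2) (v : 'cV[C]_2) :
  colnorm2 (A *m v) 0 <= (colnorm2 A 0 + colnorm2 A 1) * colnorm2 v 0.
Proof.
rewrite /colnorm2 !mulmx2E (addrACA (sqnormc (A 0 0))) mulrDl.
by apply: lerD; apply: sqnormc_dot_le.
Qed.

Lemma vnorm_le_opnorm (A : 'M[C]_2) (v : 'cV[C]_2) :
  vnorm v = 1 -> vnorm (A *m v) <= opnorm A.
Proof.
move=> v1; apply: ub_le_sup; last by exists v.
exists (Num.sqrt (colnorm2 A 0 + colnorm2 A 1)) => _ [w /= /vnorm_eq1 w1 <-].
by rewrite vnormE ler_wsqrtr // -[leRHS]mulr1 -w1 colnorm2_mulmx_le.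
Qed.

Lemma colnorm2_le_opnorm (A : 'M[C]_2) j : Num.sqrt (colnorm2 A j) <= opnorm A.
Proof.
have -> : colnorm2 A j = colnorm2 (A *m (delta_mx j 0 : 'cV_2)) 0.
  by rewrite -colE /colnorm2 !mxE.
by rewrite -vnormE vnorm_le_opnorm ?vnorm_delta.
Qed.

Lemma opnorm_le_sqrt (A : 'M[C]_2) (K : R) :
  (forall w : 'cV[C]_2, colnorm2 (A *m w) 0 = K * colnorm2 w 0) ->
  opnorm A <= Num.sqrt K.
Proof.
move=> AK; apply: ge_sup.
  by exists (vnorm (A *m delta_mx 0 0)); exists (delta_mx 0 0) => //; apply: vnorm_delta.
by move=> _ [w /= /vnorm_eq1 w1 <-]; rewrite vnormE AK w1 mulr1.
Qed.

Lemma opnorm_su2_shape_le (A : 'M[C]_2) :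
  A 0 1 = - (A 1 0)^* -> A 1 1 = (A 0 0)^* -> opnorm A <= Num.sqrt (colnorm2 A 0).
Proof.
move=> A01 A11; apply: opnorm_le_sqrt => w.
rewrite /colnorm2 !mulmx2E A01 A11.
case: (A 0 0) => a1 a2; case: (A 1 0) => b1 b2.
case: (w 0 0) => x1 x2; case: (w 1 0) => y1 y2.
by rewrite /sqnormc /=; ring.
Qed.

Lemma unitary_entries (A : 'M[C]_2) : unitary A ->
  A 0 1 = - (\det A * (A 1 0)^*) /\ A 1 1 = \det A * (A 0 0)^*.
Proof.
move=> /unitaryE[u00 u01 u10 u11]; rewrite det2E; split.
  transitivity (A 0 1 * (A 1 0 * (A 1 0)^* + A 1 1 * (A 1 1)^*)
                - A 1 1 * (A 0 0 * (A 1 0)^* + A 0 1 * (A 1 1)^*)); last by ring.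
  by rewrite u11 u01 mulr1 mulr0 subr0.
transitivity (A 1 1 * (A 0 0 * (A 0 0)^* + A 0 1 * (A 0 1)^*)
              - A 0 1 * (A 1 0 * (A 0 0)^* + A 1 1 * (A 0 1)^*)); last by ring.
by rewrite u00 u10 mulr1 mulr0 subr0.
Qed.

Lemma unitary_colnorm2 (A : 'M[C]_2) j : unitary A -> colnorm2 A j = 1.
Proof.
move=> /mulmx1C /matrixP /(_ j j); rewrite mulmx2E !adjointE !mxE eqxx => AjA.
by apply: (@complexI R); rewrite rmorphD /= !sqnormcE.
Qed.

Definition coldot (A B : 'M[C]_2) (j : 'I_2) : C :=
  (A 0 j)^* * B 0 j + (A 1 j)^* * B 1 j.

Lemma colnorm2_subZ (A B : 'M[C]_2) (lam : C) j :
  colnorm2 (A - lam *: B) j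
  = colnorm2 A j + sqnormc lam * colnorm2 B j - 2 * complex.Re (lam * coldot A B j).
Proof.
rewrite /colnorm2 /coldot !mxE !sqnormcB !sqnormcM.
have -> : lam * ((A 0 j)^* * B 0 j + (A 1 j)^* * B 1 j)
          = (A 0 j)^* * (lam * B 0 j) + (A 1 j)^* * (lam * B 1 j) by ring.
by rewrite raddfD /=; ring.
Qed.

Lemma coldot1_su2 (A B : 'M[C]_2) : unitary A -> \det A = 1 -> unitary B ->
  coldot A B 1 = \det B * (coldot A B 0)^*.
Proof.
move=> /unitary_entries[A01 A11] detA /unitary_entries[B01 B11].
rewrite /coldot A01 A11 B01 B11 detA !mul1r conjCD !conjCM !conjCN !conjCK.
by ring.
Qed.

Lemma sqnormc1_sqr_conj (mu d : C) :
  sqnormc mu = 1 -> mu * mu * d = 1 -> d = mu^* * mu^*.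
Proof.
move=> /mulJ_sqnormc1 muJmu mmd.
have -> : mu^* * mu^* = mu^* * mu^* * (mu * mu * d) by rewrite mmd mulr1.
have -> : mu^* * mu^* * (mu * mu * d) = (mu^* * mu) * (mu^* * mu) * d by ring.
by rewrite muJmu !mul1r.
Qed.

Lemma sqnormc1_mulr_sqr_conj (mu d : C) :
  sqnormc mu = 1 -> mu * mu * d = 1 -> mu * d = mu^*.
Proof.
move=> mu1 mmd; rewrite (sqnormc1_sqr_conj mu1 mmd) mulrA.
by rewrite [mu * _]mulrC (mulJ_sqnormc1 mu1) mul1r.
Qed.

(* With z := lam mu0^* and w := mu0 s, the left-hand side is 2 Re z Re w,
   where |Re z| <= 1; the sign of mu is chosen to make 2 Re (mu s) = 2 |Re w|. *)
Lemma Re_phase_pm_le (lam mu0 d s : C) :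
  sqnormc lam = 1 -> sqnormc mu0 = 1 -> mu0 * mu0 * d = 1 ->
  exists2 mu, mu = mu0 \/ mu = - mu0 &
    complex.Re (lam * s) + complex.Re (lam * (d * s^*)) <= 2 * complex.Re (mu * s).
Proof.
move=> lam1 mu01 mmd; set z := lam * mu0^*; set w := mu0 * s.
have -> : lam * s = z * w.
  by rewrite /z /w mulrA -(mulrA lam) (mulJ_sqnormc1 mu01) mulr1.
have -> : lam * (d * s^*) = z * w^*.
  by rewrite (sqnormc1_sqr_conj mu01 mmd) /z /w rmorphM /= !mulrA.
have Rez2 : complex.Re z ^+ 2 <= 1.
  by apply: le_trans (Re_sqr_le_sqnormc z) _; rewrite sqnormcM sqnormcJ lam1 mu01 mulr1.
rewrite ReM_add_ReMJ.
have [Rew_ge0 | Rew_lt0] := lerP 0 (complex.Re w).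
  by exists mu0; [left | nra].
exists (- mu0); first by right.
have ReNw : complex.Re (- w) = - complex.Re w by case: (w).
by rewrite mulNr ReNw; nra.
Qed.

Section NearestPhase.
Variables (Rm U : 'M[C]_2).
Hypotheses (unitary_Rm : unitary Rm) (det_Rm : \det Rm = 1) (unitary_U : unitary U).

Lemma colnorm2_su2_subZ (lam : C) j : sqnormc lam = 1 ->
  colnorm2 (Rm - lam *: U) j = 2 - 2 * complex.Re (lam * coldot Rm U j).
Proof.
by move=> lam1; rewrite colnorm2_subZ !unitary_colnorm2 // lam1 mulr1.
Qed.

Lemma su2_subZ_shape (mu : C) : sqnormc mu = 1 -> mu * mu * \det U = 1 ->
  let A := Rm - mu *: U in A 0 1 = - (A 1 0)^* /\ A 1 1 = (A 0 0)^*.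
Proof.
move=> mu1 mmd A; have mud := sqnormc1_mulr_sqr_conj mu1 mmd.
have [R01 R11] := unitary_entries unitary_Rm.
have [U01 U11] := unitary_entries unitary_U.
rewrite /A !mxE R01 R11 U01 U11 det_Rm !mul1r !conjCB !conjCM -mud.
by split; ring.
Qed.

Lemma opnorm_subZ_pm_le (lam mu0 : C) (eps : R) :
  sqnormc lam = 1 -> sqnormc mu0 = 1 -> mu0 * mu0 * \det U = 1 ->
  opnorm (Rm - lam *: U) <= eps ->
  exists2 mu, mu = mu0 \/ mu = - mu0 & opnorm (Rm - mu *: U) <= eps.
Proof.
move=> lam1 mu01 mmd near_lam.
have [mu mu_pm Re_le] := Re_phase_pm_le (coldot Rm U 0) lam1 mu01 mmd.
have mu1 : sqnormc mu = 1 by case: mu_pm => ->; rewrite ?sqnormcN.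
have mmd' : mu * mu * \det U = 1 by case: mu_pm => ->; rewrite ?mulrNN.
exists mu; first exact: mu_pm.
have [A01 A11] := su2_subZ_shape mu1 mmd'.
apply: le_trans (opnorm_su2_shape_le A01 A11) _.
have col_le j : Num.sqrt (colnorm2 (Rm - lam *: U) j) <= eps.
  exact: le_trans (colnorm2_le_opnorm (Rm - lam *: U) j) near_lam.
move: (col_le 0) (col_le 1).
rewrite !colnorm2_su2_subZ // coldot1_su2 // => col0 col1.
have [le_col0 | lt_col0] := lerP (2 - 2 * complex.Re (mu * coldot Rm U 0))
                                 (2 - 2 * complex.Re (lam * coldot Rm U 0)).
  by apply: le_trans col0; rewrite ler_wsqrtr.
by apply: le_trans col1; rewrite ler_wsqrtr //; lra.
Qed.

End NearestPhase.

End CliffordT.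

Theorem lemma7p18 (R : realType) (eps : R) (Rm U : 'M[R[i]]_2) :
  0 < eps -> unitary Rm -> \det Rm = 1 -> clifford_T U ->
  ((exists lam : R[i], `|lam| = 1 /\ opnorm (Rm - lam *: U) <= eps) <->
   (exists n : int, opnorm (Rm - expi (n%:~R * pi / 8) *: U) <= eps)).
Proof.
move=> _ uR dR cU; have uU := clifford_T_unitary cU.
have [k detU] := clifford_T_det cU.
split=> [[lam [/sqnormc_eq1 lam1 near_lam]] | [n near_n]]; last first.
  by exists (expi (n%:~R * pi / 8)); rewrite norm_expi.
pose mu0 : R[i] := expi ((- k)%:~R * pi / 8).
have mmd : mu0 * mu0 * \det U = 1.
  by rewrite detU !expiD -expi0; congr expi; rewrite intrN; field.
have [mu [->|->] near_mu] := opnorm_subZ_pm_le uR dR uU lam1 (sqnorm_expi _) mmd near_lam.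
  by exists (- k).
exists (- k + 8).
have -> : (- k + 8)%:~R * pi / 8 = (- k)%:~R * pi / 8 + pi :> R by rewrite intrD; field.
by rewrite -expiD expi_pi mulrN1.
Qed.
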